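(* Assume values are i.i.d. with CDF $F$ on $[0,\bar v]$ and continuous density $f > 0$, and $2 \le k < n$. Let $z$ be the interim payment function of the efficient allocation rule, $\bar R = n\,\mathbb E[z(v)]$, $G(u) = \binom{n-1}{k-1}(1-F(u))^{k-2}F(u)^{n-k} f(u)$, $$ N(v) = \int_0^v \big[z'(u) - \bar R\, G(u)\big](1-F(u))\,du, \qquad D(v) = \binom{n-1}{k-1} F(v)^{n-k}(1-F(v))^k, $$ and $\psi(v) = N(v)/D(v)$ for $v \in (0,\bar v)$. Then $\lim_{v \downarrow 0}\psi(v) = 0$.
   Context: Setting: $n$ unit-demand bidders, $k$ identical items. The efficient allocation rule gives one item to each of the $k$ bidders with the highest values (ties broken by any fixed rule). Its interim allocation is $x(v) = \mathbb E[A_i(\bm v)\mid v_i = v]$ and interim payment $z(v) = v x(v) - \int_0^v x(u)\,du$. *)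

From Stdlib Require Export Reals Binomial.
From Coquelicot Require Export Coquelicot.
Open Scope R_scope.

(* Interim allocation of the efficient rule for a bidder with value v:
   probability that at most k-1 of the other n-1 i.i.d. bidders have a
   value exceeding v (ties have probability zero since F is continuous). *)
Definition interim_alloc (n k : nat) (F : R -> R) (v : R) : R :=
  sum_f_R0 (fun j => Binomial.C (n - 1) j * (1 - F v) ^ j * (F v) ^ (n - 1 - j)) (k - 1).

Definition interim_pay (n k : nat) (F : R -> R) (v : R) : R :=
  v * interim_alloc n k F v - RInt (fun u => interim_alloc n k F u) 0 v.

Definition exp_revenue (n k : nat) (F f : R -> R) (vbar : R) : R :=
  INR n * RInt (fun v => interim_pay n k F v * f v) 0 vbar.

Definition Gfun (n k : nat) (F f : R -> R) (u : R) : R :=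
  Binomial.C (n - 1) (k - 1) * (1 - F u) ^ (k - 2) * (F u) ^ (n - k) * f u.

Definition Nfun (n k : nat) (F f : R -> R) (vbar v : R) : R :=
  RInt (fun u => (Derive (interim_pay n k F) u
                  - exp_revenue n k F f vbar * Gfun n k F f u) * (1 - F u)) 0 v.

Definition Dfun (n k : nat) (F : R -> R) (v : R) : R :=
  Binomial.C (n - 1) (k - 1) * (F v) ^ (n - k) * (1 - F v) ^ k.

Definition psi (n k : nat) (F f : R -> R) (vbar v : R) : R :=
  Nfun n k F f vbar v / Dfun n k F v.

From Stdlib Require Import Reals Binomial Lia Lra.
From Coquelicot Require Import Coquelicot.
Open Scope R_scope.

(* Near 0 the density stays within a factor 2 of f(0) > 0, so F(v) is of order v.
   The interim allocation is P(F(v)) for the polynomial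
   P(y) = sum_{j<k} C(n-1,j) (1-y)^j y^(n-1-j), hence z'(u) = u f(u) P'(F(u)),
   and every term of P' carries a factor y^(n-k-1). Together with
   G(u) = O(F(u)^(n-k)) this bounds the integrand of N by O(v^(n-k)) on [0, v],
   so N(v) = O(v^(n-k+1)), whereas D(v) is at least a multiple of v^(n-k).
   Thus psi(v) = O(v). *)

Lemma continuous_Rplus (g h : R -> R) x :
  continuous g x -> continuous h x -> continuous (fun y => g y + h y) x.
Proof. exact (continuous_plus g h x). Qed.

Lemma continuous_Rmult (g h : R -> R) x :
  continuous g x -> continuous h x -> continuous (fun y => g y * h y) x.
Proof. exact (continuous_mult g h x). Qed.

Lemma continuous_Rminus (g h : R -> R) x :
  continuous g x -> continuous h x -> continuous (fun y => g y - h y) x.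
Proof. exact (continuous_minus g h x). Qed.

Lemma continuous_Rpow (g : R -> R) m x :
  continuous g x -> continuous (fun y => g y ^ m) x.
Proof.
  intros Hg; induction m as [|m IH]; simpl.
  - apply continuous_const.
  - now apply continuous_Rmult.
Qed.

Ltac solve_continuous :=
  repeat (cbv beta; match goal with
  | |- continuous (fun _ => _) _ => apply continuous_const
  | |- continuous (fun y => y) _ => apply continuous_id
  | |- continuous (fun y => @?g y - @?h y) _ => apply (continuous_Rminus g h)
  | |- continuous (fun y => @?g y + @?h y) _ => apply (continuous_Rplus g h)
  | |- continuous (fun y => @?g y * @?h y) _ => apply (continuous_Rmult g h)
  | |- continuous (fun y => @?g y ^ _) _ => apply (continuous_Rpow g)
  | |- _ => assumption
  end).

Lemma continuous_sum_f_R0 (g : nat -> R -> R) m x :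
  (forall j, continuous (g j) x) -> continuous (fun y => sum_f_R0 (fun j => g j y) m) x.
Proof.
  intros Hg; induction m as [|m IH]; simpl.
  - apply Hg.
  - now apply continuous_Rplus.
Qed.

Lemma is_derive_sum_f_R0 (g dg : nat -> R -> R) m y :
  (forall j, is_derive (g j) y (dg j y)) ->
  is_derive (fun x => sum_f_R0 (fun j => g j x) m) y (sum_f_R0 (fun j => dg j y) m).
Proof.
  intros Hg; induction m as [|m IH]; simpl.
  - apply Hg.
  - now apply (is_derive_plus (fun x => sum_f_R0 (fun j => g j x) m) (g (S m))).
Qed.

Lemma filterlim_Rmult_at_right_0 (l : R) : filterlim (fun v => l * v) (at_right 0) (locally 0).
Proof.
  apply (filterlim_filter_le_1 _ (filter_le_within (F := locally 0) _)).
  pose proof (continuous_Rmult (fun _ => l) (fun v => v) 0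
                (continuous_const _ _) (continuous_id _)) as Hlin.
  unfold continuous in Hlin; rewrite Rmult_0_r in Hlin; exact Hlin.
Qed.

Lemma ratio_tendsto_0_at_right (N D : R -> R) (del c C : R) (m : nat) :
  0 < del -> 0 < c ->
  (forall v, 0 < v < del -> Rabs (N v) <= C * v ^ S m) ->
  (forall v, 0 < v < del -> c * v ^ m <= D v) ->
  filterlim (fun v => N v / D v) (at_right 0) (locally 0).
Proof.
  intros Hdel Hc HN HD.
  apply (filterlim_le_le (fun v => - (C / c) * v) _ (fun v => C / c * v) (Finite 0)).
  - exists (mkposreal del Hdel); intros v Hv Hv0.
    change (Rabs (v - 0) < del) in Hv; rewrite Rminus_0_r, Rabs_pos_eq in Hv by lra.
    assert (Hvm : 0 < v ^ m) by (apply pow_lt; lra).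
    assert (HDv : 0 < D v) by (specialize (HD v (conj Hv0 Hv)); nra).
    assert (Hratio : Rabs (N v / D v) <= C / c * v).
    { rewrite Rabs_div, (Rabs_pos_eq (D v)) by lra.
      apply Rle_div_l; [lra|].
      apply Rle_trans with (C * v ^ S m); [now apply HN|].
      replace (C * v ^ S m) with (C / c * v * (c * v ^ m)) by (simpl; field; lra).
      apply Rmult_le_compat_l; [|now apply HD].
      assert (HC : 0 <= C).
      { specialize (HN v (conj Hv0 Hv)); pose proof (Rabs_pos (N v)).
        assert (0 < v ^ S m) by (apply pow_lt; lra).
        destruct (Rle_or_lt 0 C); nra. }
      apply Rmult_le_pos; [apply Rdiv_le_0_compat|]; lra. }
    apply Rabs_le_between in Hratio; lra.
  - apply filterlim_Rmult_at_right_0.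
  - apply filterlim_Rmult_at_right_0.
Qed.

Lemma C_pos (m j : nat) : 0 < Binomial.C m j.
Proof.
  unfold Binomial.C; apply Rdiv_lt_0_compat; [|apply Rmult_lt_0_compat];
    apply lt_0_INR, Factorial.lt_O_fact.
Qed.

Lemma pow_le_pow_le_1 (y : R) (m p : nat) : 0 <= y <= 1 -> (m <= p)%nat -> y ^ p <= y ^ m.
Proof.
  intros Hy Hmp; replace p with (m + (p - m))%nat by lia; rewrite pow_add.
  assert (0 <= y ^ m) by (apply pow_le; lra).
  assert (y ^ (p - m) <= 1) by (rewrite <- (pow1 (p - m)); apply pow_incr; lra).
  nra.
Qed.

Definition alloc_poly (n k : nat) : R -> R := interim_alloc n k (fun y => y).

Definition alloc_poly' (n k : nat) (y : R) : R :=
  sum_f_R0 (fun j => Binomial.C (n - 1) j *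
    (INR (n - 1 - j) * (1 - y) ^ j * y ^ pred (n - 1 - j)
     - INR j * (1 - y) ^ pred j * y ^ (n - 1 - j))) (k - 1).

Lemma is_derive_alloc_poly (n k : nat) (y : R) : is_derive (alloc_poly n k) y (alloc_poly' n k y).
Proof.
  unfold alloc_poly, interim_alloc, alloc_poly'.
  apply (is_derive_sum_f_R0 (fun j y => Binomial.C (n - 1) j * (1 - y) ^ j * y ^ (n - 1 - j))
    (fun j y => Binomial.C (n - 1) j *
       (INR (n - 1 - j) * (1 - y) ^ j * y ^ pred (n - 1 - j)
        - INR j * (1 - y) ^ pred j * y ^ (n - 1 - j)))).
  intros j; auto_derive; [easy | unfold Rminus; ring].
Qed.

Lemma continuous_alloc_poly' (n k : nat) (y : R) : continuous (alloc_poly' n k) y.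
Proof. unfold alloc_poly'; apply continuous_sum_f_R0; intros j; solve_continuous. Qed.

Lemma bernstein_monomial_bound (y : R) (a b m : nat) :
  0 <= y <= 1 -> (m <= b)%nat -> 0 <= (1 - y) ^ a * y ^ b <= y ^ m.
Proof.
  intros Hy Hmb.
  pose proof (pow_le_pow_le_1 (1 - y) 0 a ltac:(lra) (Nat.le_0_l a)) as Ha1.
  pose proof (pow_le (1 - y) a ltac:(lra)); pose proof (pow_le y b ltac:(lra)).
  pose proof (pow_le_pow_le_1 y m b Hy Hmb).
  split; [now apply Rmult_le_pos|].
  apply Rle_trans with (1 * y ^ m); [apply Rmult_le_compat; simpl in Ha1; lra | lra].
Qed.

Lemma alloc_poly'_bound (n k : nat) : (1 <= k)%nat -> (k < n)%nat ->
  exists M, 0 <= M /\ forall y, 0 <= y <= 1 -> Rabs (alloc_poly' n k y) <= M * y ^ (n - k - 1).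
Proof.
  intros Hk Hkn.
  exists (sum_f_R0 (fun j => Binomial.C (n - 1) j * (INR (n - 1 - j) + INR j)) (k - 1)).
  split.
  - apply cond_pos_sum; intros j.
    pose proof (C_pos (n - 1) j); pose proof (pos_INR j); pose proof (pos_INR (n - 1 - j)).
    apply Rmult_le_pos; lra.
  - intros y Hy; eapply Rle_trans; [apply sum_f_R0_triangle|].
    rewrite Rmult_comm, scal_sum; apply sum_Rle; intros j Hj.
    pose proof (bernstein_monomial_bound y j (pred (n - 1 - j)) (n - k - 1) Hy ltac:(lia)) as HA.
    pose proof (bernstein_monomial_bound y (pred j) (n - 1 - j) (n - k - 1) Hy ltac:(lia)) as HB.
    pose proof (pos_INR j); pose proof (pos_INR (n - 1 - j)); pose proof (C_pos (n - 1) j).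
    rewrite Rabs_mult, Rabs_pos_eq, !Rmult_assoc by lra.
    apply Rmult_le_compat_l; [lra|].
    set (A := (1 - y) ^ j * y ^ pred (n - 1 - j)) in *.
    set (B := (1 - y) ^ pred j * y ^ (n - 1 - j)) in *.
    assert (INR (n - 1 - j) * A <= INR (n - 1 - j) * y ^ (n - k - 1))
      by (apply Rmult_le_compat_l; lra).
    assert (INR j * B <= INR j * y ^ (n - k - 1)) by (apply Rmult_le_compat_l; lra).
    assert (0 <= INR (n - 1 - j) * A) by (apply Rmult_le_pos; lra).
    assert (0 <= INR j * B) by (apply Rmult_le_pos; lra).
    apply Rabs_le; split; lra.
Qed.

Lemma is_derive_RInt_continuous (g : R -> R) (a t : R) :
  (forall s, continuous g s) -> is_derive (RInt g a) t (g t).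
Proof.
  intros Hg; apply (is_derive_RInt g (RInt g a) a t); [|apply Hg].
  apply filter_forall; intros b; apply (RInt_correct g a b).
  apply (@ex_RInt_continuous R_CompleteNormedModule); intros; apply Hg.
Qed.

Lemma is_derive_mul_id_sub_RInt (X dX : R -> R) (a t : R) :
  (forall s, is_derive X s (dX s)) ->
  is_derive (fun s => s * X s - RInt X a s) t (t * dX t).
Proof.
  intros HX.
  assert (HXc : forall s, continuous X s).
  { intros s; apply (@ex_derive_continuous R_AbsRing R_NormedModule); eexists; apply HX. }
  pose proof (is_derive_mult (fun s => s) X t one _ (is_derive_id t) (HX t) Rmult_comm) as Hmul.
  pose proof (is_derive_minus _ _ t _ _ Hmul (is_derive_RInt_continuous X a t HXc)) as Hsub.
  replace (t * dX t) with (minus (plus (mult one (X t)) (mult t (dX t))) (X t)); [exact Hsub|].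
  unfold minus, plus, mult, opp, one; simpl; ring.
Qed.

Definition clamp (a b t : R) : R := Rmax a (Rmin t b).

Lemma clamp_in_interval (a b t : R) : a <= b -> a <= clamp a b t <= b.
Proof. intros; unfold clamp, Rmax, Rmin; repeat destruct Rle_dec; lra. Qed.

Lemma clamp_id (a b t : R) : a <= t <= b -> clamp a b t = t.
Proof. intros; unfold clamp, Rmax, Rmin; repeat destruct Rle_dec; lra. Qed.

Lemma clamp_lipschitz (a b x y : R) : a <= b -> Rabs (clamp a b x - clamp a b y) <= Rabs (x - y).
Proof.
  intros; unfold clamp, Rmax, Rmin.
  repeat destruct Rle_dec; unfold Rabs; repeat destruct Rcase_abs; lra.
Qed.

Lemma continuous_comp_clamp (g : R -> R) (a b : R) : a <= b ->
  (forall u, a <= u <= b ->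
     filterlim g (within (fun t => a <= t <= b) (locally u)) (locally (g u))) ->
  forall t, continuous (fun s => g (clamp a b s)) t.
Proof.
  intros Hab Hg t.
  apply filterlim_comp with (G := within (fun s => a <= s <= b) (locally (clamp a b t)));
    [|apply Hg, clamp_in_interval, Hab].
  intros P [eps HP]; exists eps; intros s Hs.
  apply HP; [|now apply clamp_in_interval].
  eapply Rle_lt_trans; [apply clamp_lipschitz, Hab | exact Hs].
Qed.

Lemma RInt_between_const (g : R -> R) (lo hi a b : R) :
  a <= b -> ex_RInt g a b -> (forall t, a <= t <= b -> lo <= g t <= hi) ->
  lo * (b - a) <= RInt g a b <= hi * (b - a).
Proof.
  intros Hab Hg Hbnd.
  assert (Hconst : forall c, RInt (fun _ => c) a b = c * (b - a)).
  { intros c; rewrite RInt_const; unfold scal; simpl; unfold mult; simpl; ring. }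
  rewrite <- (Hconst lo), <- (Hconst hi).
  split; apply RInt_le; auto using ex_RInt_const; intros t Ht; apply Hbnd; lra.
Qed.

Lemma payment_integrand_bound (n k : nat) (M Rb b u v y phi : R) :
  (k < n)%nat -> 0 <= M ->
  (forall y, 0 <= y <= 1 -> Rabs (alloc_poly' n k y) <= M * y ^ (n - k - 1)) ->
  0 <= u <= v -> 0 <= phi <= b -> 0 <= y <= b * v -> b * v <= 1 ->
  Rabs ((u * (phi * alloc_poly' n k y)
         - Rb * (Binomial.C (n - 1) (k - 1) * (1 - y) ^ (k - 2) * y ^ (n - k) * phi)) * (1 - y))
  <= (M + Rabs Rb * Binomial.C (n - 1) (k - 1) * b) * (b * v) ^ (n - k).
Proof.
  intros Hkn HM HMb Hu Hphi Hy Hbv.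
  pose proof (C_pos (n - 1) (k - 1)).
  set (w := b * v) in *; set (Cb := Binomial.C (n - 1) (k - 1)) in *.
  set (A := u * (phi * alloc_poly' n k y)).
  set (B := Rb * (Cb * (1 - y) ^ (k - 2) * y ^ (n - k) * phi)).
  assert (Hw_pow : w ^ (n - k) = w * w ^ (n - k - 1)).
  { replace (n - k)%nat with (S (n - k - 1)) at 1 by lia; reflexivity. }
  assert (HA : Rabs A <= M * w ^ (n - k)).
  { assert (Hdy : Rabs (alloc_poly' n k y) <= M * w ^ (n - k - 1)).
    { eapply Rle_trans; [apply HMb; lra|].
      apply Rmult_le_compat_l; [lra | apply pow_incr; lra]. }
    pose proof (Rabs_pos (alloc_poly' n k y)).
    unfold A; rewrite !Rabs_mult, (Rabs_pos_eq u), (Rabs_pos_eq phi), Hw_pow by lra.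
    apply Rle_trans with (v * (b * (M * w ^ (n - k - 1)))); [|unfold w; right; ring].
    apply Rmult_le_compat; try nra; apply Rmult_le_compat; lra. }
  assert (HB : Rabs B <= Rabs Rb * Cb * b * w ^ (n - k)).
  { pose proof (bernstein_monomial_bound y (k - 2) 0 0 ltac:(lra) (le_n 0)) as H1y.
    rewrite Rmult_1_r in H1y.
    assert (0 <= y ^ (n - k) <= w ^ (n - k)) by (split; [apply pow_le | apply pow_incr]; lra).
    assert (0 <= Cb * (1 - y) ^ (k - 2) * y ^ (n - k) * phi).
    { apply Rmult_le_pos; [apply Rmult_le_pos; [apply Rmult_le_pos|]|]; lra. }
    unfold B; rewrite Rabs_mult, (Rabs_pos_eq (Cb * _ * _ * _)) by lra.
    rewrite !Rmult_assoc; apply Rmult_le_compat_l; [apply Rabs_pos|].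
    apply Rmult_le_compat_l; [lra|].
    rewrite (Rmult_comm b), <- Rmult_assoc.
    apply Rmult_le_compat; nra. }
  rewrite Rabs_mult, (Rabs_pos_eq (1 - y)) by lra.
  pose proof (Rabs_triang A (- B)) as Htri; rewrite Rabs_Ropp in Htri.
  change (A - B) with (A + - B).
  assert (Rabs (A + - B) * (1 - y) <= Rabs (A + - B))
    by (pose proof (Rabs_pos (A + - B)); nra).
  rewrite Rmult_plus_distr_r; lra.
Qed.

Lemma density_comparable_near_0 (g : R -> R) (vbar : R) :
  0 < vbar -> 0 < g 0 ->
  filterlim g (within (fun t => 0 <= t <= vbar) (locally 0)) (locally (g 0)) ->
  exists del, (0 < del <= vbar) /\ 4 * g 0 * del <= 1 /\
    forall t, 0 <= t < del -> g 0 / 2 <= g t <= 2 * g 0.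
Proof.
  intros Hvbar Hg0 Hg.
  assert (Hhalf : 0 < g 0 / 2) by lra.
  destruct (Hg (ball (g 0) (mkposreal _ Hhalf)) (locally_ball _ _)) as [e He].
  exists (Rmin (Rmin e vbar) (/ (4 * g 0))).
  pose proof (cond_pos e); pose proof (Rinv_0_lt_compat (4 * g 0) ltac:(lra)).
  pose proof (Rmin_l (Rmin e vbar) (/ (4 * g 0))); pose proof (Rmin_r (Rmin e vbar) (/ (4 * g 0))).
  pose proof (Rmin_l e vbar); pose proof (Rmin_r e vbar).
  split; [split|split].
  - repeat apply Rmin_glb_lt; lra.
  - lra.
  - apply Rle_trans with (4 * g 0 * / (4 * g 0)); [apply Rmult_le_compat_l; lra|].
    right; field; lra.
  - intros t Ht.
    assert (Hball : ball 0 e t).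
    { change (Rabs (t - 0) < e); rewrite Rminus_0_r, Rabs_pos_eq; lra. }
    specialize (He t Hball ltac:(lra)); change (Rabs (g t - g 0) < g 0 / 2) in He.
    apply Rabs_def2 in He; lra.
Qed.

Section PaymentNearZero.

Variables (n k : nat) (vbar : R) (F f : R -> R).
Hypothesis Hk : (1 <= k)%nat.
Hypothesis Hkn : (k < n)%nat.
Hypothesis Hvbar : 0 < vbar.
Hypothesis Hf_cont : forall u, 0 <= u <= vbar ->
  filterlim f (within (fun t => 0 <= t <= vbar) (locally u)) (locally (f u)).
Hypothesis HF : forall u, 0 <= u <= vbar -> F u = RInt f 0 u.

(* Only the values on [0, vbar] matter; clamping makes [f] and [F] regular on all of R. *)
Let ft (t : R) : R := f (clamp 0 vbar t).
Let Ft (t : R) : R := RInt ft 0 t.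

Lemma continuous_ft (t : R) : continuous ft t.
Proof. apply continuous_comp_clamp; [lra | exact Hf_cont]. Qed.

Lemma ft_eq (u : R) : 0 <= u <= vbar -> ft u = f u.
Proof. intros Hu; unfold ft; now rewrite clamp_id. Qed.

Lemma is_derive_Ft (t : R) : is_derive Ft t (ft t).
Proof. apply is_derive_RInt_continuous, continuous_ft. Qed.

Lemma continuous_Ft (t : R) : continuous Ft t.
Proof. apply (@ex_derive_continuous R_AbsRing R_NormedModule); eexists; apply is_derive_Ft. Qed.

Lemma F_eq_Ft (u : R) : 0 <= u <= vbar -> F u = Ft u.
Proof.
  intros Hu; rewrite HF by exact Hu; apply RInt_ext; intros x Hx.
  rewrite Rmin_left, Rmax_right in Hx by lra.
  symmetry; apply ft_eq; lra.
Qed.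

Lemma Derive_interim_pay (u : R) : 0 < u < vbar ->
  Derive (interim_pay n k F) u = u * (ft u * alloc_poly' n k (Ft u)).
Proof.
  intros Hu.
  assert (Halloc : forall s, 0 <= s <= vbar -> interim_alloc n k F s = alloc_poly n k (Ft s)).
  { intros s Hs; rewrite <- F_eq_Ft by exact Hs; reflexivity. }
  rewrite (Derive_ext_loc _ (fun s => s * alloc_poly n k (Ft s)
                                      - RInt (fun s => alloc_poly n k (Ft s)) 0 s)).
  - apply is_derive_unique.
    apply (is_derive_mul_id_sub_RInt _ (fun s => ft s * alloc_poly' n k (Ft s))); intros s.
    apply (is_derive_comp (alloc_poly n k) Ft); [apply is_derive_alloc_poly | apply is_derive_Ft].
  - apply (filter_imp (fun w => 0 < w /\ w < vbar)).
    + intros w Hw; unfold interim_pay; rewrite Halloc by lra; f_equal.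
      apply RInt_ext; intros x Hx; rewrite Rmin_left, Rmax_right in Hx by lra.
      apply Halloc; lra.
    + apply (open_and _ _ (open_gt 0) (open_lt vbar)); lra.
Qed.

Let payment_integrand (u : R) : R :=
  (u * (ft u * alloc_poly' n k (Ft u)) - exp_revenue n k F f vbar * Gfun n k Ft ft u)
  * (1 - Ft u).

Lemma continuous_payment_integrand (u : R) : continuous payment_integrand u.
Proof.
  pose proof (continuous_comp Ft (alloc_poly' n k) u (continuous_Ft u)
                (continuous_alloc_poly' n k (Ft u))).
  pose proof (continuous_ft u); pose proof (continuous_Ft u).
  unfold payment_integrand, Gfun; solve_continuous.
Qed.

Lemma Nfun_eq_RInt (v : R) : 0 < v < vbar -> Nfun n k F f vbar v = RInt payment_integrand 0 v.
Proof.
  intros Hv; unfold Nfun; apply RInt_ext; intros x Hx.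
  rewrite Rmin_left, Rmax_right in Hx by lra.
  rewrite Derive_interim_pay by lra.
  unfold payment_integrand, Gfun; rewrite F_eq_Ft, ft_eq by lra; reflexivity.
Qed.

Variables (a del : R).
Hypothesis Ha : 0 < a.
Hypothesis Hdel : 0 < del <= vbar.
Hypothesis Hdel_small : 4 * a * del <= 1.
Hypothesis Hf_near0 : forall t, 0 <= t < del -> a / 2 <= f t <= 2 * a.

Lemma Ft_near0 (u : R) : 0 <= u < del -> a / 2 * u <= Ft u <= 2 * a * u.
Proof.
  intros Hu.
  pose proof (RInt_between_const ft (a / 2) (2 * a) 0 u) as Hbounds.
  rewrite Rminus_0_r in Hbounds; apply Hbounds; [lra | |].
  - apply (@ex_RInt_continuous R_CompleteNormedModule); intros; apply continuous_ft.
  - intros t Ht; rewrite ft_eq by lra; apply Hf_near0; lra.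
Qed.

Lemma Nfun_near0_bound :
  exists C, forall v, 0 < v < del -> Rabs (Nfun n k F f vbar v) <= C * v ^ S (n - k).
Proof.
  destruct (alloc_poly'_bound n k Hk Hkn) as [M [HM HMb]].
  set (K := M + Rabs (exp_revenue n k F f vbar) * Binomial.C (n - 1) (k - 1) * (2 * a)).
  exists (K * (2 * a) ^ (n - k)); intros v Hv.
  rewrite Nfun_eq_RInt by lra.
  eapply Rle_trans.
  - apply (abs_RInt_le_const _ 0 v (K * (2 * a * v) ^ (n - k))); [lra | |].
    + apply (@ex_RInt_continuous R_CompleteNormedModule); intros; apply continuous_payment_integrand.
    + intros u Hu; pose proof (Ft_near0 u ltac:(lra)).
      assert (0 <= ft u <= 2 * a) by (rewrite ft_eq by lra; pose proof (Hf_near0 u); lra).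
      apply payment_integrand_bound; auto; nra.
  - right; rewrite Rpow_mult_distr; simpl; ring.
Qed.

Lemma Dfun_near0_lower_bound (v : R) : 0 < v < del ->
  Binomial.C (n - 1) (k - 1) * (a / 2) ^ (n - k) * (/ 2) ^ k * v ^ (n - k) <= Dfun n k F v.
Proof.
  intros Hv; unfold Dfun; rewrite F_eq_Ft by lra.
  pose proof (Ft_near0 v ltac:(lra)); pose proof (C_pos (n - 1) (k - 1)).
  assert (H1 : (a / 2 * v) ^ (n - k) <= Ft v ^ (n - k)) by (apply pow_incr; nra).
  assert (H2 : (/ 2) ^ k <= (1 - Ft v) ^ k) by (apply pow_incr; nra).
  pose proof (pow_le (a / 2 * v) (n - k) ltac:(nra)); pose proof (pow_le (/ 2) k ltac:(lra)).
  rewrite Rpow_mult_distr in *.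
  replace (Binomial.C (n - 1) (k - 1) * (a / 2) ^ (n - k) * (/ 2) ^ k * v ^ (n - k))
    with (Binomial.C (n - 1) (k - 1) * ((a / 2) ^ (n - k) * v ^ (n - k)) * (/ 2) ^ k) by ring.
  apply Rmult_le_compat; [| lra | apply Rmult_le_compat_l | exact H2]; nra.
Qed.

End PaymentNearZero.

Theorem mainTheorem14 (n k : nat) (vbar : R) (F f : R -> R) :
  (2 <= k)%nat -> (k < n)%nat -> 0 < vbar ->
  (forall u, 0 <= u <= vbar -> 0 < f u) ->
  (forall u, 0 <= u <= vbar ->
     filterlim f (within (fun t => 0 <= t <= vbar) (locally u)) (locally (f u))) ->
  (forall u, 0 <= u <= vbar -> F u = RInt f 0 u) ->
  F vbar = 1 ->
  (forall u, u < 0 -> F u = 0) ->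
  (forall u, vbar < u -> F u = 1) ->
  filterlim (psi n k F f vbar) (at_right 0) (locally 0).
Proof.
  (* The values of F at vbar and outside [0, vbar] play no role: the limit is local at 0. *)
  intros Hk Hkn Hvbar Hf_pos Hf_cont HF _ _ _.
  assert (Hf0 : 0 < f 0) by (apply Hf_pos; lra).
  destruct (density_comparable_near_0 f vbar Hvbar Hf0 (Hf_cont 0 ltac:(lra)))
    as (del & Hdel & Hdel_small & Hf_near0).
  destruct (Nfun_near0_bound n k vbar F f ltac:(lia) Hkn Hvbar Hf_cont HF (f 0) del
              Hf0 Hdel Hdel_small Hf_near0) as [C HN].
  apply (ratio_tendsto_0_at_right _ _ del
           (Binomial.C (n - 1) (k - 1) * (f 0 / 2) ^ (n - k) * (/ 2) ^ k) C (n - k) (proj1 Hdel));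
    [| exact HN |].
  - pose proof (C_pos (n - 1) (k - 1)).
    pose proof (pow_lt (f 0 / 2) (n - k) ltac:(lra)); pose proof (pow_lt (/ 2) k ltac:(lra)).
    apply Rmult_lt_0_compat; [apply Rmult_lt_0_compat|]; assumption.
  - exact (Dfun_near0_lower_bound n k vbar F f Hvbar Hf_cont HF (f 0) del
             Hf0 Hdel Hdel_small Hf_near0).
Qed.
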